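(* Let $f=\frac1n\sum_{i=1}^n f_i$ where each $f_i:\mathbb{R}^d\to\mathbb{R}$ is $L$-smooth, and assume moreover that either each $f_i$ is $\mu$-strongly convex for some $\mu>0$, or $\inf_x f(x)>-\infty$. Let the stepsize satisfy $\gamma\le\frac1{Ln}$. Then the iterates of No Full Grad SVRG (described in the context) satisfy, for every epoch $s$, $$f(\omega_{s+1})\le f(\omega_s)-\frac{\gamma n}{2}\|\nabla f(\omega_s)\|^2+\frac{\gamma n}{2}\Big\|\nabla f(\omega_s)-\frac1n\sum_{t=0}^{n-1}v_s^t\Big\|^2.$$
   Context: No Full Grad SVRG: input $x_0^0\in\mathbb{R}^d$, $\omega_0=x_0^0$, $\tilde v_0^0=0$, $v_0=0$, stepsize $\gamma>0$. For epochs $s=0,1,\dots$: choose a permutation $\pi_s^0,\dots,\pi_s^{n-1}$ of the $n$ component indices (by any shuffling rule); for $t=0,\dots,n-1$ set $\tilde v_s^{t+1}=\frac{t}{t+1}\tilde v_s^t+\frac1{t+1}\nabla f_{\pi_s^t}(x_s^t)$, $v_s^t=\nabla f_{\pi_s^t}(x_s^t)-\nabla f_{\pi_s^t}(\omega_s)+v_s$, $x_s^{t+1}=x_s^t-\gamma v_s^t$; then $x_{s+1}^0=x_s^n$, $\omega_{s+1}=x_s^n$, $\tilde v_{s+1}^0=0$, $v_{s+1}=\tilde v_s^n$. *)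

From HB Require Import structures.
From mathcomp Require Import all_boot all_order all_algebra all_fingroup.
From mathcomp Require Import all_classical all_reals all_analysis.
Set Implicit Arguments. Unset Strict Implicit. Unset Printing Implicit Defensive.
Import Order.TTheory GRing.Theory Num.Theory.
Import numFieldNormedType.Exports.
Local Open Scope ring_scope.

Definition dotv {R : realType} {d : nat} (u v : 'rV[R]_d) : R :=
  \sum_(j < d) u ord0 j * v ord0 j.
Definition enorm {R : realType} {d : nat} (u : 'rV[R]_d) : R :=
  Num.sqrt (dotv u u).

Definition grad {R : realType} {d : nat} (f : 'rV[R]_d -> R^o) (x : 'rV[R]_d)
  : 'rV[R]_d := \row_(j < d) derive f x (delta_mx 0 j).

Definition L_smooth {R : realType} {d : nat} (L : R) (f : 'rV[R]_d -> R^o) :=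
  (forall x, differentiable f x) /\
  (forall x y, enorm (grad f x - grad f y) <= L * enorm (x - y)).

Definition strongly_convex {R : realType} {d : nat} (mu : R) (f : 'rV[R]_d -> R) :=
  forall (x y : 'rV[R]_d) (t : R), 0 <= t <= 1 ->
    f (t *: x + (1 - t) *: y) <=
      t * f x + (1 - t) * f y - mu / 2 * t * (1 - t) * enorm (x - y) ^+ 2.

Definition avgf {R : realType} {d n : nat} (F : 'I_n -> 'rV[R]_d -> R)
  : 'rV[R]_d -> R^o := fun x => n%:R^-1 * \sum_(i < n) F i x.

Section NFG.
Context {R : realType} {d n : nat} (F : 'I_n -> 'rV[R]_d -> R^o)
  (gamma : R) (pi : nat -> {perm 'I_n}) (x00 : 'rV[R]_d).

(* One inner step t (0 <= t < n) of epoch s, given omega_s and v_s: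
   (x_s^t, tilde v_s^t) |-> (x_s^{t+1}, tilde v_s^{t+1}). *)
Definition nfg_inner_step (s : nat) (om v : 'rV[R]_d) (t : nat)
    (st : 'rV[R]_d * 'rV[R]_d) : 'rV[R]_d * 'rV[R]_d :=
  match (insub t : option 'I_n) with
  | Some i =>
      let j := pi s i in
      let x := st.1 in
      (x - gamma *: (grad (F j) x - grad (F j) om + v),
       (t%:R / (t.+1)%:R) *: st.2 + (t.+1)%:R^-1 *: grad (F j) x)
  | None => st
  end.

Fixpoint nfg_inner (s : nat) (om v : 'rV[R]_d) (t : nat) : 'rV[R]_d * 'rV[R]_d :=
  match t with
  | 0 => (om, 0)
  | t'.+1 => nfg_inner_step s om v t' (nfg_inner s om v t')
  end.

(* (omega_s, v_s); omega_0 = x_0^0, v_0 = 0, and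
   omega_{s+1} = x_s^n, v_{s+1} = tilde v_s^n. Note x_s^0 = omega_s for all s. *)
Fixpoint nfg_epoch (s : nat) : 'rV[R]_d * 'rV[R]_d :=
  match s with
  | 0 => (x00, 0)
  | s'.+1 => let: (om, v) := nfg_epoch s' in nfg_inner s' om v n
  end.

Definition nfg_omega (s : nat) : 'rV[R]_d := (nfg_epoch s).1.
Definition nfg_v (s : nat) : 'rV[R]_d := (nfg_epoch s).2.
Definition nfg_x (s t : nat) : 'rV[R]_d :=
  (nfg_inner s (nfg_omega s) (nfg_v s) t).1.

Definition nfg_vst (s : nat) (t : 'I_n) : 'rV[R]_d :=
  grad (F (pi s t)) (nfg_x s t) - grad (F (pi s t)) (nfg_omega s) + nfg_v s.

End NFG.

From HB Require Import structures.
From mathcomp Require Import all_boot all_order all_algebra all_fingroup.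
From mathcomp Require Import all_classical all_reals all_analysis.
Import Order.TTheory GRing.Theory Num.Theory.
Import numFieldNormedType.Exports.
From mathcomp Require Import ring lra.
Local Open Scope classical_set_scope.
Local Open Scope ring_scope.

(* One epoch moves the iterate by [omega_(s+1) = omega_s - (gamma n) g], where
   [g] is the average of the inner directions [v_s^t].  The descent inequality
   [f (x + h) <= f x + <grad f x, h> + L/2 |h|^2] of an L-smooth function passes
   from the [f_i] to their average; applied to this step, together with
   [-2 <G, g> = |G - g|^2 - |G|^2 - |g|^2], it gives the claim up to the extra
   term [-(gamma n / 2) (1 - gamma n L) |g|^2], which is nonpositive because
   [gamma <= 1 / (L n)]. *)

Section InnerProduct.
Context {R : realType} {d : nat}.
Implicit Types u v w : 'rV[R]_d.

Lemma dotvC u v : dotv u v = dotv v u.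
Proof. by apply: eq_bigr => j _; rewrite mulrC. Qed.

Lemma dotvDl u v w : dotv (u + v) w = dotv u w + dotv v w.
Proof. by rewrite /dotv -big_split; apply: eq_bigr => j _; rewrite !mxE mulrDl. Qed.

Lemma dotvZl (k : R) u w : dotv (k *: u) w = k * dotv u w.
Proof. by rewrite /dotv mulr_sumr; apply: eq_bigr => j _; rewrite !mxE mulrA. Qed.

Lemma dotvBl u v w : dotv (u - v) w = dotv u w - dotv v w.
Proof. by rewrite dotvDl -scaleN1r dotvZl mulN1r. Qed.

Lemma dotvZr (k : R) u w : dotv w (k *: u) = k * dotv w u.
Proof. by rewrite dotvC dotvZl dotvC. Qed.

Lemma dotvBr u v w : dotv w (u - v) = dotv w u - dotv w v.
Proof. by rewrite dotvC dotvBl !(dotvC w). Qed.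

Lemma dotv_suml (I : finType) (f : I -> 'rV[R]_d) w :
  dotv (\sum_i f i) w = \sum_i dotv (f i) w.
Proof.
rewrite /dotv exchange_big; apply: eq_bigr => j _.
by rewrite summxE mulr_suml.
Qed.

Lemma dotvv_ge0 u : 0 <= dotv u u.
Proof. by apply: sumr_ge0 => j _; rewrite -expr2 sqr_ge0. Qed.

Lemma enorm_ge0 u : 0 <= enorm u.
Proof. exact: sqrtr_ge0. Qed.

Lemma enorm_sqr u : enorm u ^+ 2 = dotv u u.
Proof. by rewrite sqr_sqrtr // dotvv_ge0. Qed.

Lemma dotv_young {k : R} u v : 0 < k ->
  2 * dotv u v <= k^-1 * dotv u u + k * dotv v v.
Proof.
move=> k_gt0; have := dotvv_ge0 (u - k *: v).
rewrite !(dotvBl, dotvBr, dotvZl, dotvZr) (dotvC v u) => sq_ge0.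
have kV_gt0 : 0 < k^-1 by rewrite invr_gt0.
have := mulr_ge0 (ltW kV_gt0) sq_ge0.
set A := dotv u u; set B := dotv v v; set C := dotv u v.
have -> : k^-1 * (A - k * C - k * (C - k * B)) = k^-1 * A + k * B - 2 * C.
  by field; rewrite gt_eqF.
lra.
Qed.

End InnerProduct.

Lemma is_derive_quad (R : realType) (a b t : R) :
  is_derive t 1 (fun s : R => a * s + b * s ^+ 2) (a + b * (2 * t)).
Proof.
have -> : (fun s : R => a * s + b * s ^+ 2) = a *: id + b *: (@id R) ^+ 2.
  by apply/funext => s /=; rewrite !fctE.
apply: is_derive_eq.
by rewrite [a%:A]mulr1 [_%:A]mulr1 [b *: _]/GRing.scale /= expr1.
Qed.

Section Smoothness.
Context {R : realType} {d : nat}.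
Implicit Types (f : 'rV[R]_d -> R^o) (x h : 'rV[R]_d).

Lemma derive_grad f x h : differentiable f x -> 'D_h f x = dotv (grad f x) h.
Proof.
move=> df; rewrite deriveE // {1}(row_sum_delta h) linear_sum.
by apply: eq_bigr => j _; rewrite linearZ /= mxE -deriveE // mulrC.
Qed.

Lemma is_derive_line f x h (t : R) : derivable f (x + t *: h) h ->
  is_derive t 1 (fun s : R => f (x + s *: h)) ('D_h f (x + t *: h)).
Proof.
have shiftE : (fun e : R => e^-1 *: (((fun s : R => f (x + s *: h)) \o shift t) (e *: 1)
     - f (x + t *: h))) =
   (fun e : R => e^-1 *: ((f \o shift (x + t *: h)) (e *: h) - f (x + t *: h))).
  by apply/funext => e /=; rewrite [e%:A]mulr1 scalerDl addrCA.
by split; [rewrite /derivable shiftE | rewrite /derive shiftE].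
Qed.

Definition quad_upper_bound (L : R) f :=
  forall x h, f (x + h) <= f x + dotv (grad f x) h + L / 2 * dotv h h.

(* Mean value theorem for [f (x + s h)] minus the quadratic majorant: the
   Lipschitz gradient makes the derivative of the difference nonpositive. *)
Lemma L_smooth_quad_upper_bound {L : R} {f} : 0 < L -> L_smooth L f ->
  quad_upper_bound L f.
Proof.
move=> L_gt0 [df lip] x h.
set a := dotv (grad f x) h; set b := L / 2 * dotv h h.
pose psi : R -> R := fun s => f (x + s *: h) - (a * s + b * s ^+ 2).
pose dpsi : R -> R := fun s => 'D_h f (x + s *: h) - (a + b * (2 * s)).
have psi_derive (s : R) : is_derive s 1 psi (dpsi s).
  apply: is_deriveB; last exact: is_derive_quad.
  exact/is_derive_line/diff_derivable.
have psi_cont : {within `[0, 1], continuous psi}.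
  by apply: derivable_within_continuous => s _; case: (psi_derive s).
have [c c01 psi10] := MVT ltr01 (fun s _ => psi_derive s) psi_cont.
have Lc_gt0 : 0 < L * c.
  by move: c01; rewrite in_itv /= => /andP[c_gt0 _]; rewrite mulr_gt0.
have dpsi_le0 : dpsi c <= 0.
  set D := grad f (x + c *: h) - grad f x.
  have DD : dotv D D <= (L * c) ^+ 2 * dotv h h.
    have := lip (x + c *: h) x; rewrite addrAC subrr add0r => lipc.
    rewrite -enorm_sqr (_ : _ * _ = (L * enorm (c *: h)) ^+ 2); last first.
      by rewrite !exprMn enorm_sqr dotvZl dotvZr; ring.
    by rewrite lerXn2r // nnegrE ?enorm_ge0 // (le_trans (enorm_ge0 D)).
  have DDc : (L * c)^-1 * dotv D D <= L * c * dotv h h.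
    by rewrite -(ler_pM2l Lc_gt0) mulrA mulfV ?gt_eqF // mul1r mulrA -expr2.
  have young := dotv_young D h Lc_gt0.
  rewrite /dpsi /= derive_grad //.
  have -> : dotv (grad f (x + c *: h)) h = a + dotv D h by rewrite dotvBl /a; ring.
  have -> : b * (2 * c) = L * c * dotv h h by rewrite /b; field.
  lra.
move: psi10; rewrite /psi /= scale1r scale0r addr0.
lra.
Qed.

Lemma quad_upper_bound_step (L : R) f x g (eta : R) :
  quad_upper_bound L f -> 0 < eta -> eta * L <= 1 ->
  f (x - eta *: g) <= f x - eta / 2 * enorm (grad f x) ^+ 2
                          + eta / 2 * enorm (grad f x - g) ^+ 2.
Proof.
move=> qub eta_gt0 etaL_le1.
have := qub x (- (eta *: g)); rewrite -scaleNr !(dotvZl, dotvZr).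
rewrite !enorm_sqr dotvBl !dotvBr (dotvC g).
have : 0 <= (1 - eta * L) * (eta * dotv g g).
  by apply: mulr_ge0; [rewrite subr_ge0 | exact: mulr_ge0 (ltW eta_gt0) (dotvv_ge0 g)].
nra.
Qed.

End Smoothness.

Section Average.
Context {R : realType} {d n : nat} {F : 'I_n -> 'rV[R]_d -> R^o}.
Hypothesis F_diff : forall i x, differentiable (F i) x.

Lemma grad_avgf x : grad (avgf F) x = n%:R^-1 *: \sum_i grad (F i) x.
Proof.
have avgfE : avgf F = n%:R^-1 \*: \sum_i F i.
  by apply/funext => y; rewrite /avgf /= fct_sumE.
apply/rowP => j; rewrite !mxE summxE avgfE.
have : is_derive x (delta_mx 0 j) (n%:R^-1 \*: \sum_i F i)
    (n%:R^-1 *: \sum_i 'D_(delta_mx 0 j) (F i) x).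
  apply: is_deriveZ; apply: is_derive_sum => i.
  exact/derivableP/diff_derivable.
move=> Dj; rewrite (@derive_val _ _ _ _ _ _ _ Dj).
by congr (_ * _); apply: eq_bigr => i _; rewrite mxE.
Qed.

Lemma quad_upper_bound_avgf {L : R} : (0 < n)%N ->
  (forall i, quad_upper_bound L (F i)) -> quad_upper_bound L (avgf F).
Proof.
move=> n_gt0 qubF x h; rewrite grad_avgf dotvZl dotv_suml /avgf.
have nV_gt0 : 0 < n%:R^-1 :> R by rewrite invr_gt0 ltr0n.
apply: le_trans (_ : n%:R^-1 * \sum_i (F i x + dotv (grad (F i) x) h
   + L / 2 * dotv h h) <= _).
  by rewrite ler_pM2l //; apply: ler_sum => i _; apply: qubF.
rewrite !big_split /= sumr_const card_ord !mulrDr -[L / 2 * _ *+ n]mulr_natl.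
by rewrite mulKf // pnatr_eq0 -lt0n.
Qed.

End Average.

Section NoFullGradSVRG.
Context {R : realType} {d n : nat} (F : 'I_n -> 'rV[R]_d -> R^o)
  (gamma : R) (pi : nat -> {perm 'I_n}).

Lemma nfg_inner_fst s om v t : (t <= n)%N ->
  (nfg_inner F gamma pi s om v t).1 = om - gamma *: \sum_(i < n | (i < t)%N)
     (grad (F (pi s i)) (nfg_inner F gamma pi s om v i).1 - grad (F (pi s i)) om + v).
Proof.
elim: t => [_|t IH t_lt_n] /=.
  by rewrite big_pred0 ?scaler0 ?subr0 // => i; rewrite ltn0.
rewrite /nfg_inner_step; case: insubP => [i _ iE|]; last by rewrite t_lt_n.
subst t; rewrite [in RHS](bigD1 i) //=.
rewrite (eq_bigl (fun k : 'I_n => (k < i)%N)); last first.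
  by move=> k /=; rewrite ltnS leq_eqVlt -val_eqE; case: ltngtP.
rewrite {1}IH 1?ltnW //.
set S := \sum_(k < n | _) _; set X := _ + v.
by rewrite -addrA -opprD -scalerDr [S + X]addrC.
Qed.

Lemma nfg_omegaS x00 s :
  nfg_omega F gamma pi x00 s.+1 =
  nfg_omega F gamma pi x00 s - gamma *: \sum_(t < n) nfg_vst F gamma pi x00 s t.
Proof.
have -> : nfg_omega F gamma pi x00 s.+1 = (nfg_inner F gamma pi s
    (nfg_omega F gamma pi x00 s) (nfg_v F gamma pi x00 s) n).1.
  rewrite /nfg_omega /nfg_v [nfg_epoch _ _ _ _ s.+1]/=.
  by case: (nfg_epoch F gamma pi x00 s).
rewrite nfg_inner_fst //; congr (_ - _ *: _).
by apply: eq_bigl => i; exact: ltn_ord.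
Qed.

End NoFullGradSVRG.

Theorem lemma5 (R : realType) (d n : nat) (F : 'I_n -> 'rV[R]_d -> R^o)
  (L gamma : R) (pi : nat -> {perm 'I_n}) (x00 : 'rV[R]_d) :
  (0 < n)%N ->
  (forall i, L_smooth L (F i)) ->
  ((exists mu : R, 0 < mu /\ forall i, strongly_convex mu (F i)) \/
   (exists m : R, forall x, m <= avgf F x)) ->
  0 < gamma -> gamma <= (L * n%:R)^-1 ->
  forall s : nat,
    avgf F (nfg_omega F gamma pi x00 s.+1) <=
      avgf F (nfg_omega F gamma pi x00 s)
      - gamma * n%:R / 2 * enorm (grad (avgf F) (nfg_omega F gamma pi x00 s)) ^+ 2
      + gamma * n%:R / 2 *
          enorm (grad (avgf F) (nfg_omega F gamma pi x00 s)
                 - n%:R^-1 *: \sum_(t < n) nfg_vst F gamma pi x00 s t) ^+ 2.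
Proof.
move=> n_gt0 smooth _ gamma_gt0 gamma_le s.
have n_pos : 0 < n%:R :> R by rewrite ltr0n.
have L_gt0 : 0 < L.
  rewrite ltNge; apply/negP => L_le0; move: (lt_le_trans gamma_gt0 gamma_le).
  by rewrite invr_gt0 pmulr_lgt0 // ltNge L_le0.
have step_le : gamma * n%:R * L <= 1.
  by rewrite -mulrA [n%:R * L]mulrC -ler_pdivlMr ?mul1r // mulr_gt0.
have F_diff i x : differentiable (F i) x by case: (smooth i).
have qub := quad_upper_bound_avgf F_diff n_gt0
  (fun i => L_smooth_quad_upper_bound L_gt0 (smooth i)).
rewrite nfg_omegaS (_ : gamma *: _ = (gamma * n%:R) *: (n%:R^-1 *: \sum_(t < n)
  nfg_vst F gamma pi x00 s t)); last by rewrite scalerA -mulrA mulfV ?mulr1 // gt_eqF.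
by apply: quad_upper_bound_step qub _ step_le; rewrite mulr_gt0.
Qed.
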